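(* Let $A=(a_{ij})\in\mathbb{Z}^{d\times n}$ with $\Delta:=\max_{i,j}|a_{ij}|\ge 1$, $b\in\mathbb{Z}^d$, $u\in\mathbb{Z}^n_{\ge0}$, $U:=\sum_{j=1}^n u_j$, and $$M:=\Delta U+\max(\|b\|_\infty,\|u\|_\infty)+\Delta+2.$$ Then a vector $(x,s)\in\mathbb{Z}^{n}_{\ge0}\times\mathbb{Z}^{n+1}_{\ge 0}$ (with $x=(x_1,\dots,x_n)$, $s=(s_1,\dots,s_{n+1})$) satisfies the system $$\sum_{j=1}^n a_{ij}x_j=b_i\ (i\in[d]),\qquad x_j+s_j=u_j\ (j\in[n]),\qquad \sum_{j=1}^n(x_j+s_j)+s_{n+1}=U$$ if and only if it satisfies the single equation $$\sum_{i=1}^d M^{i-1}\sum_{j=1}^n a_{ij}x_j+\sum_{j=1}^n M^{d+j-1}(x_j+s_j)+M^{d+n}\Big(\sum_{j=1}^n(x_j+s_j)+s_{n+1}\Big)=\sum_{i=1}^d M^{i-1}b_i+\sum_{j=1}^n M^{d+j-1}u_j+M^{d+n}U.$$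
   Context: $[n]=\{1,\dots,n\}$. The system encodes the ILP constraints $Ax=b$, $0\le x\le u$ with slack variables $s_j$. *)

(* Integers are `int`; indices are 0-based ordinals. *)
From mathcomp Require Import all_boot all_order all_algebra.
Set Implicit Arguments. Unset Strict Implicit. Unset Printing Implicit Defensive.
Import Order.TTheory GRing.Theory Num.Theory.
Local Open Scope ring_scope.

Definition maxAbsEntry (d n : nat) (A : 'M[int]_(d, n)) : int :=
  \big[Num.max/0]_(i < d) \big[Num.max/0]_(j < n) `|A i j|.

Definition infNorm (m : nat) (v : 'I_m -> int) : int :=
  \big[Num.max/0]_(i < m) `|v i|.

(* Read off the aggregated equation as a base-M expansion whose digits are the
   residuals of the original constraints, with the total-capacity residual T - U
   in the top position (T being the left side of the last constraint).  Every
   low residual is bounded by Delta * T + max(|b|, |u|), and a geometric-series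
   estimate bounds (M - 1) |T - U| by the same quantity; the choice of M makes
   this impossible unless T = U.  Once T = U all residuals are smaller than M in
   absolute value, so uniqueness of balanced base-M expansions forces them to
   vanish. *)
From mathcomp Require Import all_boot all_order all_algebra.
From mathcomp Require Import zify ring lra.
Set Implicit Arguments. Unset Strict Implicit. Unset Printing Implicit Defensive.
Import Order.TTheory GRing.Theory Num.Theory.
Local Open Scope ring_scope.

Lemma expansion_norm_le (R : realDomainType) (K : nat) (c : 'I_K -> R) (B M : R) :
  0 <= B -> 1 <= M -> (forall k, `|c k| <= B) ->
  (M - 1) * `|\sum_(k < K) M ^+ k * c k| <= B * (M ^+ K - 1).
Proof.
move=> B0 M1; elim: K c => [|K IH] c cB.
  by rewrite big_ord0 normr0 mulr0 expr0 subrr mulr0.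
rewrite big_ord_recr /= exprS.
set S := \sum_(_ < _) _.
have IHS : (M - 1) * `|S| <= B * (M ^+ K - 1) by apply: IH => k; apply: cB.
have MK0 : 0 <= M ^+ K by apply: exprn_ge0; lra.
have top : `|M ^+ K * c ord_max| <= M ^+ K * B.
  by rewrite normrM ger0_norm // ler_wpM2l.
have tri : (M - 1) * `|S + M ^+ K * c ord_max|
           <= (M - 1) * `|S| + (M - 1) * (M ^+ K * B).
  by rewrite -mulrDr ler_wpM2l ?subr_ge0 // (le_trans (ler_normD _ _)) ?lerD.
apply: le_trans tri _; nra.
Qed.

Lemma expansion_top_coef_le (R : realDomainType) (K : nat) (c : 'I_K -> R)
    (B M t : R) :
  0 <= B -> 1 <= M -> (forall k, `|c k| <= B) ->
  \sum_(k < K) M ^+ k * c k + M ^+ K * t = 0 -> (M - 1) * `|t| <= B.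
Proof.
move=> B0 M1 cB /eqP; rewrite addr_eq0 => /eqP sumE.
have MK1 : 1 <= M ^+ K by rewrite exprn_ege1.
have := expansion_norm_le B0 M1 cB.
rewrite sumE normrN normrM ger0_norm; last lra.
have : 0 <= (M - 1) * `|t| by rewrite mulr_ge0 ?subr_ge0.
nra.
Qed.

Lemma expansion_eq0 (K : nat) (c : 'I_K -> int) (M : int) :
  (forall k, `|c k| < M) -> \sum_(k < K) M ^+ k * c k = 0 -> forall k, c k = 0.
Proof.
elim: K c => [|K IH] c cM sum0 k; first by case: k.
have M0 : 0 <= M by apply: le_trans (ltW (cM ord0)).
move: sum0; rewrite big_ord_recl expr0 mul1r.
under eq_bigr => i _ do rewrite lift0 exprS -mulrA.
rewrite -mulr_sumr; set S := \sum_(_ < _) _ => sum0.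
(* c 0 = - M S with |c 0| < M forces the integer S to vanish. *)
have S0 : S = 0.
  apply/eqP; apply: contraT => /negPf S_neq0.
  have S1 : 1 <= `|S| by rewrite -gtz0_ge1 normr_gt0 S_neq0.
  have := cM ord0; have -> : c ord0 = - (M * S) by lra.
  rewrite normrN normrM ger0_norm //; nia.
case: (unliftP ord0 k) => [j ->|->]; last by move: sum0; rewrite S0 mulr0 addr0.
exact: (IH (fun i => c (lift ord0 i))).
Qed.

Lemma eq_of_scaled_gap_le (D U m T : int) :
  1 <= D -> 0 <= U -> 0 <= m ->
  (D * U + m + D + 1) * `|T - U| <= D * T + m -> T = U.
Proof.
move=> D1 U0 m0; case: (ltrgtP T U) => // [TU | UT]; nia.
Qed.

Lemma norm_le_infNorm (m : nat) (v : 'I_m -> int) i : `|v i| <= infNorm v.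
Proof. exact: (le_bigmax _ (fun k => `|v k|)). Qed.

Lemma max_infNorm_ge0 (m m' : nat) (v : 'I_m -> int) (w : 'I_m' -> int) :
  0 <= Num.max (infNorm v) (infNorm w).
Proof. by rewrite le_max /infNorm bigmax_ge_id. Qed.

Lemma norm_le_maxAbsEntry (d n : nat) (A : 'M[int]_(d, n)) i j :
  `|A i j| <= maxAbsEntry A.
Proof. exact: le_trans (norm_le_infNorm (A i) j) (le_bigmax _ _ i). Qed.

Section Aggregation.

Variables (d n : nat) (A : 'M[int]_(d, n)) (b : 'I_d -> int).
Variables (u x : 'I_n -> int) (s : 'I_n.+1 -> int).

Local Notation Delta := (maxAbsEntry A).
Local Notation U := (\sum_(j < n) u j).
Local Notation Nbu := (Num.max (infNorm b) (infNorm u)).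
Local Notation s' j := (s (widen_ord (leqnSn n) j)).
Local Notation T := (\sum_(j < n) (x j + s' j) + s ord_max).

Definition residual (k : 'I_(d + n)) : int :=
  match split k with
  | inl i => \sum_(j < n) A i j * x j - b i
  | inr j => x j + s' j - u j
  end.

Lemma residual_lshift i : residual (lshift n i) = \sum_(j < n) A i j * x j - b i.
Proof. by rewrite /residual -[lshift n i]/(unsplit (inl _ i)) unsplitK. Qed.

Lemma residual_rshift j : residual (rshift d j) = x j + s' j - u j.
Proof. by rewrite /residual -[rshift d j]/(unsplit (inr _ j)) unsplitK. Qed.

Lemma residual_expansionE (w : int) :
  \sum_(i < d) w ^+ i * (\sum_(j < n) A i j * x j)
  + \sum_(j < n) w ^+ (d + j) * (x j + s' j) + w ^+ (d + n) * T
  - (\sum_(i < d) w ^+ i * b i + \sum_(j < n) w ^+ (d + j) * u j + w ^+ (d + n) * U)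
  = \sum_(k < d + n) w ^+ k * residual k + w ^+ (d + n) * (T - U).
Proof.
rewrite big_split_ord /=.
have -> : \sum_(i < d) w ^+ lshift n i * residual (lshift n i)
          = \sum_(i < d) w ^+ i * (\sum_(j < n) A i j * x j)
            - \sum_(i < d) w ^+ i * b i.
  by rewrite -sumrB; apply: eq_bigr => i _; rewrite residual_lshift mulrBr.
have -> : \sum_(j < n) w ^+ rshift d j * residual (rshift d j)
          = \sum_(j < n) w ^+ (d + j) * (x j + s' j)
            - \sum_(j < n) w ^+ (d + j) * u j.
  by rewrite -sumrB; apply: eq_bigr => j _; rewrite residual_rshift mulrBr.
ring.
Qed.

Hypotheses (hDelta : 1 <= Delta) (hu : forall j, 0 <= u j).
Hypotheses (hx : forall j, 0 <= x j) (hs : forall j, 0 <= s j).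

Lemma column_total_le j : x j + s' j <= T.
Proof.
have xs0 k : 0 <= x k + s' k by rewrite addr_ge0.
apply: (@le_trans _ _ (\sum_(k < n) (x k + s' k))); last by rewrite lerDl.
by rewrite (bigD1 j) //= lerDl sumr_ge0.
Qed.

Lemma norm_residual_le k : `|residual k| <= Delta * T + Nbu.
Proof.
rewrite /residual; case: split => [i | j].
- apply: le_trans (ler_normB _ _) _; apply: lerD; last first.
    by apply: le_trans (norm_le_infNorm b i) _; rewrite le_max lexx.
  apply: le_trans (ler_norm_sum _ _ _) _.
  have xT : \sum_(j < n) x j <= T.
    apply: (@le_trans _ _ (\sum_(j < n) (x j + s' j))); last by rewrite lerDl.
    by apply: ler_sum => j _; rewrite lerDl.
  apply: (@le_trans _ _ (\sum_(j < n) Delta * x j)).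
    apply: ler_sum => j _; rewrite normrM (ger0_norm (hx j)) ler_wpM2r //.
    exact: norm_le_maxAbsEntry.
  by rewrite -mulr_sumr ler_wpM2l // (le_trans ler01).
- have uj : u j <= Nbu.
    rewrite -[u j]ger0_norm ?hu // (le_trans (norm_le_infNorm u j)) //.
    by rewrite le_max lexx orbT.
  have := column_total_le j; have := hx j; have := hs (widen_ord (leqnSn n) j).
  have := hu j; have := max_infNorm_ge0 b u; rewrite ler_norml; nia.
Qed.

Local Notation M := (Delta * U + Nbu + Delta + 2).

Hypothesis expansion0 :
  \sum_(k < d + n) M ^+ k * residual k + M ^+ (d + n) * (T - U) = 0.

Lemma total_eq : T = U.
Proof.
have T0 : 0 <= T by rewrite addr_ge0 ?sumr_ge0 // => j _; rewrite addr_ge0.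
have B0 : 0 <= Delta * T + Nbu by have := max_infNorm_ge0 b u; nia.
have U0 : 0 <= U by apply: sumr_ge0.
have M1 : 1 <= M by have := max_infNorm_ge0 b u; nia.
have := expansion_top_coef_le B0 M1 norm_residual_le expansion0.
have -> : M - 1 = Delta * U + Nbu + Delta + 1 by ring.
exact: eq_of_scaled_gap_le (max_infNorm_ge0 b u).
Qed.

Lemma residual_eq0 k : residual k = 0.
Proof.
apply: (expansion_eq0 (M := M)) => [i | ].
  by apply: le_lt_trans (norm_residual_le i) _; rewrite total_eq; lia.
by move: expansion0; rewrite total_eq subrr mulr0 addr0.
Qed.

End Aggregation.

Theorem mainTheorem2 (d n : nat) (A : 'M[int]_(d, n)) (b : 'I_d -> int)
  (u : 'I_n -> int)
  (hDelta : 1 <= maxAbsEntry A)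
  (hu : forall j, 0 <= u j)
  (x : 'I_n -> int) (s : 'I_n.+1 -> int)
  (hx : forall j, 0 <= x j) (hs : forall j, 0 <= s j) :
  let Delta := maxAbsEntry A in
  let U := \sum_(j < n) u j in
  let M := Delta * U + Num.max (infNorm b) (infNorm u) + Delta + 2 in
  ((forall i : 'I_d, \sum_(j < n) A i j * x j = b i) /\
   (forall j : 'I_n, x j + s (widen_ord (leqnSn n) j) = u j) /\
   (\sum_(j < n) (x j + s (widen_ord (leqnSn n) j)) + s ord_max = U))
  <->
  (\sum_(i < d) M ^+ i * (\sum_(j < n) A i j * x j)
   + \sum_(j < n) M ^+ (d + j) * (x j + s (widen_ord (leqnSn n) j))
   + M ^+ (d + n) * (\sum_(j < n) (x j + s (widen_ord (leqnSn n) j)) + s ord_max)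
   = \sum_(i < d) M ^+ i * b i
     + \sum_(j < n) M ^+ (d + j) * u j
     + M ^+ (d + n) * U).
Proof.
cbv zeta; split.
  move=> [rowsE [colsE totalE]]; rewrite totalE; congr (_ + _ + _).
    by apply: eq_bigr => i _; rewrite rowsE.
  by apply: eq_bigr => j _; rewrite colsE.
move/eqP; rewrite -subr_eq0 residual_expansionE => /eqP expansion0.
have res0 := residual_eq0 hDelta hu hx hs expansion0.
split; [|split].
- by move=> i; apply/eqP; have /eqP := res0 (lshift n i); rewrite residual_lshift subr_eq0.
- by move=> j; apply/eqP; have /eqP := res0 (rshift d j); rewrite residual_rshift subr_eq0.
- exact: total_eq hDelta hu hx hs expansion0.
Qed.
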